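(* Let $\mathbb A$ be a graph of groups and $\mathcal B$ a folded $\mathbb A$-graph with associated graph of groups $\mathbb B$. Let $p=a_0,e_1,a_1,\dots,e_k,a_k$ ($k\ge0$) be a reduced $\mathbb A$-path. Then $\bar p=\overline{\mu(q)}$ for some reduced $\mathbb B$-path $q$ if and only if there exist a reduced $\mathbb B$-path $q=b_0,f_1,b_1,\dots,b_{k-1},f_k,b_k$ and elements $c_i\in A_{e_i}$ ($i=1,\dots,k$) such that $[f_i]=e_i$ and $a_0=b_0(f_1)_\alpha\alpha_{e_1}(c_1)$, $a_i=\omega_{e_i}(c_i)^{-1}(f_i)_\omega b_i(f_{i+1})_\alpha\alpha_{e_{i+1}}(c_{i+1})$ for $i=1,\dots,k-1$, and $a_k=\omega_{e_k}(c_k)^{-1}(f_k)_\omega b_k$.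
   Context: Graphs are in Serre's sense. A graph of groups $\mathbb A$ has vertex groups $A_v$, edge groups $A_e=A_{e^{-1}}$, monomorphisms $\alpha_e:A_e\to A_{o(e)}$, $\omega_e:A_e\to A_{t(e)}$ with $\alpha_{e^{-1}}=\omega_e$. An $\mathbb A$-path is $a_0,e_1,a_1,\dots,e_k,a_k$ with $e_i$ an edge path and $a_i$ in the appropriate vertex groups; it is reduced if it has no subsequence $e,\omega_e(c),e^{-1}$ with $c\in A_e$. $\sim$ is the equivalence relation generated (modulo concatenation) by $a,e,\omega_e(c),e^{-1},\bar a\sim a\alpha_e(c)\bar a$, and $\bar p$ is the class of $p$. An $\mathbb A$-graph $\mathcal B$: graph $B$, graph morphism $[\cdot]:B\to A$, subgroups $B_u\le A_{[u]}$, elements $f_\alpha\in A_{[o(f)]}$, $f_\omega\in A_{[t(f)]}$ with $(f^{-1})_\alpha=f_\omega^{-1}$. Its graph of groups $\mathbb B$: graph $B$, vertex groups $B_u$, edge groups $B_f=\alpha_{[f]}^{-1}(f_\alpha^{-1}B_{o(f)}f_\alpha)\cap\omega_{[f]}^{-1}(f_\omega B_{t(f)}f_\omega^{-1})$, $\alpha_f(g)=f_\alpha\alpha_{[f]}(g)f_\alpha^{-1}$, $\omega_f(g)=f_\omega^{-1}\omega_{[f]}(g)f_\omega$. A $\mathbb B$-path $b_0,f_1,\dots,f_s,b_s$ is reduced if it has no subsequence $f,\omega_f(c),f^{-1}$ with $c\in B_f$, and $\mu(q)=(b_0(f_1)_\alpha),[f_1],((f_1)_\omega b_1(f_2)_\alpha),\dots,[f_s],((f_s)_\omega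 b_s)$. $\mathcal B$ is folded if neither holds: (1) distinct edges $f_1,f_2$ with $o(f_1)=o(f_2)=z$, $[f_1]=[f_2]=e$, and $(f_2)_\alpha=a'(f_1)_\alpha\alpha_e(c)$ for some $c\in A_e$, $a'\in B_z$; (2) an edge $f$ with $[f]=e$ and $\alpha_e^{-1}(f_\alpha^{-1}B_{o(f)}f_\alpha)\neq\omega_e^{-1}(f_\omega B_{t(f)}f_\omega^{-1})$. *)

From Stdlib Require Import Relations.

(* A group is given by a carrier predicate [gin] on an ambient
   type X together with operations; all group axioms are required on
   members.  (Every group arises this way, e.g. with X its own carrier
   and [gin] everywhere true.)  Using a common ambient type for all
   vertex groups (resp. all edge groups) of a graph of groups avoids
   dependent-type casts; membership "a in A_v" is [gin (Av v) a].      *)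
Record grp_on (X : Type) := GrpOn {
  gin : X -> Prop;
  gmul : X -> X -> X;
  ginv : X -> X;
  gone : X;
  gone_in : gin gone;
  gmul_in : forall x y, gin x -> gin y -> gin (gmul x y);
  ginv_in : forall x, gin x -> gin (ginv x);
  gmulA : forall x y z, gin x -> gin y -> gin z ->
            gmul x (gmul y z) = gmul (gmul x y) z;
  gmul1g : forall x, gin x -> gmul gone x = x;
  gmulVg : forall x, gin x -> gmul (ginv x) x = gone }.

Arguments gin {X} g x.
Arguments gmul {X} g x y.
Arguments ginv {X} g x.
Arguments gone {X} g.

Definition is_subgroup {X : Type} (G : grp_on X) (H : X -> Prop) : Prop :=
  (forall x, H x -> gin G x) /\ H (gone G) /\
  (forall x y, H x -> H y -> H (gmul G x y)) /\
  (forall x, H x -> H (ginv G x)).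

Definition is_mono {X Y : Type} (H : grp_on Y) (G : grp_on X) (f : Y -> X) : Prop :=
  (forall y, gin H y -> gin G (f y)) /\
  (forall y z, gin H y -> gin H z -> f (gmul H y z) = gmul G (f y) (f z)) /\
  (forall y z, gin H y -> gin H z -> f y = f z -> y = z).

Record serre_graph := SerreGraph {
  sV : Type;
  sE : Type;
  so : sE -> sV;
  sinv : sE -> sE;
  sinvK : forall e, sinv (sinv e) = e;
  sinv_neq : forall e, sinv e <> e }.

Arguments so {s} e.
Arguments sinv {s} e.

Definition st {G : serre_graph} (e : sE G) : sV G := so (sinv e).

(* Graphs of groups: vertex groups A_v, edge groups A_e = A_{e^{-1}},
   monomorphisms alpha_e : A_e -> A_{o(e)}; omega_e := alpha_{e^{-1}}
   (so that alpha_{e^{-1}} = omega_e holds by definition, and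
   omega_e : A_e = A_{e^{-1}} -> A_{t(e)} is a monomorphism). *)
Record graph_of_groups := GraphOfGroups {
  gG :> serre_graph;
  VX : Type;   (* ambient type of the vertex groups *)
  EX : Type;   (* ambient type of the edge groups *)
  Av : sV gG -> grp_on VX;
  Ae : sE gG -> grp_on EX;
  Ae_inv : forall e, Ae (sinv e) = Ae e;
  alpha : sE gG -> EX -> VX;
  alpha_mono : forall e, is_mono (Ae e) (Av (so e)) (alpha e) }.

Arguments Av {g} v.
Arguments Ae {g} e.
Arguments alpha {g} e c.

Definition omega {A : graph_of_groups} (e : sE A) : EX A -> VX A := alpha (sinv e).

(* Generic paths  x_0, e_1, x_1, ..., e_k, x_k  (the base vertex is
   recorded in the final [PNil], needed when k = 0). *)
Inductive gpath (V E X : Type) :=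
| PNil (v : V) (x : X)
| PCons (x : X) (e : E) (p : gpath V E X).

Arguments PNil {V E X} v x.
Arguments PCons {V E X} x e p.

Definition pstart {V E X : Type} (o : E -> V) (p : gpath V E X) : V :=
  match p with PNil v _ => v | PCons _ e _ => o e end.

Fixpoint pvalid {V E X : Type} (o t : E -> V) (memb : V -> X -> Prop)
    (p : gpath V E X) : Prop :=
  match p with
  | PNil v x => memb v x
  | PCons x e p' => memb (o e) x /\ pstart o p' = t e /\ pvalid o t memb p'
  end.

Definition phead_map {V E X : Type} (h : X -> X) (p : gpath V E X) : gpath V E X :=
  match p with
  | PNil v x => PNil v (h x)
  | PCons x e p' => PCons (h x) e p'
  end.

Definition apath (A : graph_of_groups) := gpath (sV A) (sE A) (VX A).

Definition avalid (A : graph_of_groups) (p : apath A) : Prop :=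
  pvalid (@so A) (@st A) (fun v x => gin (Av v) x) p.

Fixpoint areduced (A : graph_of_groups) (p : apath A) : Prop :=
  match p with
  | PNil _ _ => True
  | PCons _ e p' =>
      areduced A p' /\
      match p' with
      | PNil _ _ => True
      | PCons w e' _ =>
          ~ (e' = sinv e /\ exists c, gin (Ae e) c /\ w = omega e c)
      end
  end.

(* elementary move (in any context):
   ..., a, e, omega_e(c), e^{-1}, abar, ...  -->  ..., a alpha_e(c) abar, ... *)
Inductive aelem (A : graph_of_groups) : apath A -> apath A -> Prop :=
| AE_base : forall (a : VX A) (e : sE A) (c : EX A) (p : apath A),
    gin (Ae e) c ->
    aelem A (PCons a e (PCons (omega e c) (sinv e) p))
            (phead_map (fun ab => gmul (Av (so e)) a (gmul (Av (so e)) (alpha e c) ab)) p)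
| AE_cons : forall (a : VX A) (e : sE A) (p q : apath A),
    aelem A p q -> aelem A (PCons a e p) (PCons a e q).

Definition aequiv (A : graph_of_groups) (p q : apath A) : Prop :=
  clos_refl_sym_trans (apath A)
    (fun x y => avalid A x /\ avalid A y /\ aelem A x y) p q.

Record agraph (A : graph_of_groups) := AGraph {
  bG :> serre_graph;
  vmap : sV bG -> sV A;
  emap : sE bG -> sE A;
  emap_o : forall f, so (emap f) = vmap (so f);
  emap_inv : forall f, emap (sinv f) = sinv (emap f);
  Bv : sV bG -> VX A -> Prop;
  Bv_sub : forall u, is_subgroup (Av (vmap u)) (Bv u);
  fa : sE bG -> VX A;
  fw : sE bG -> VX A;
  fa_in : forall f, gin (Av (vmap (so f))) (fa f);
  fw_in : forall f, gin (Av (vmap (st f))) (fw f);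
  fa_inv : forall f, fa (sinv f) = ginv (Av (vmap (st f))) (fw f) }.

Arguments vmap {A} _ _.
Arguments emap {A} _ _.
Arguments Bv {A} _ _ _.
Arguments fa {A} _ _.
Arguments fw {A} _ _.

Section AGraphDefs.
Variables (A : graph_of_groups) (B : agraph A).

Definition preim_alpha (f : sE B) (g : EX A) : Prop :=
  let Go := Av (vmap B (so f)) in
  gin (Ae (emap B f)) g /\
  exists b, Bv B (so f) b /\
    alpha (emap B f) g = gmul Go (ginv Go (fa B f)) (gmul Go b (fa B f)).

Definition preim_omega (f : sE B) (g : EX A) : Prop :=
  let Gt := Av (vmap B (st f)) in
  gin (Ae (emap B f)) g /\
  exists b, Bv B (st f) b /\
    omega (emap B f) g = gmul Gt (fw B f) (gmul Gt b (ginv Gt (fw B f))).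

Definition Bedge (f : sE B) (g : EX A) : Prop := preim_alpha f g /\ preim_omega f g.

Definition omegaB (f : sE B) (g : EX A) : VX A :=
  let Gt := Av (vmap B (st f)) in
  gmul Gt (ginv Gt (fw B f)) (gmul Gt (omega (emap B f) g) (fw B f)).

Definition bpath := gpath (sV B) (sE B) (VX A).

Definition bvalid (q : bpath) : Prop := pvalid (@so B) (@st B) (Bv B) q.

Fixpoint breduced (q : bpath) : Prop :=
  match q with
  | PNil _ _ => True
  | PCons _ f q' =>
      breduced q' /\
      match q' with
      | PNil _ _ => True
      | PCons w f' _ =>
          ~ (f' = sinv f /\ exists c, Bedge f c /\ w = omegaB f c)
      end
  end.

Definition lmul (G : grp_on (VX A)) (pre : option (VX A)) (x : VX A) : VX A :=
  match pre with None => x | Some l => gmul G l x end.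

(* mu(q) = (b_0 f1_alpha), [f_1], (f1_omega b_1 f2_alpha), ..., [f_s], (fs_omega b_s) *)
Fixpoint mu_from (pre : option (VX A)) (q : bpath) : apath A :=
  match q with
  | PNil u b => PNil (vmap B u) (lmul (Av (vmap B u)) pre b)
  | PCons b f q' =>
      PCons (gmul (Av (vmap B (so f))) (lmul (Av (vmap B (so f))) pre b) (fa B f))
            (emap B f) (mu_from (Some (fw B f)) q')
  end.

Definition mu (q : bpath) : apath A := mu_from None q.

Definition folded : Prop :=
  (~ exists (f1 f2 : sE B) (a' : VX A) (c : EX A),
       f1 <> f2 /\ so f1 = so f2 /\ emap B f1 = emap B f2 /\
       gin (Ae (emap B f1)) c /\ Bv B (so f1) a' /\
       fa B f2 = gmul (Av (vmap B (so f1)))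
                   (gmul (Av (vmap B (so f1))) a' (fa B f1))
                   (alpha (emap B f1) c)) /\
  (~ exists f : sE B, ~ (forall g, preim_alpha f g <-> preim_omega f g)).

(* The accumulator [pre] is None at the start and
   Some (omega_{ei}(c_i)^{-1} fi_omega) afterwards. *)
Fixpoint mrel (pre : option (VX A)) (p : apath A) (q : bpath) : Prop :=
  match p, q with
  | PNil v a, PNil u b => vmap B u = v /\ a = lmul (Av v) pre b
  | PCons a e p', PCons b f q' =>
      let G := Av (so e) in
      let Gt := Av (st e) in
      emap B f = e /\
      exists c, gin (Ae e) c /\
        a = lmul G pre (gmul G (gmul G b (fa B f)) (alpha e c)) /\
        mrel (Some (gmul Gt (ginv Gt (omega e c)) (fw B f))) p' q'
  | _, _ => False
  end.

End AGraphDefs.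

Arguments bpath {A} B.
Arguments bvalid {A} B q.
Arguments breduced {A} B q.
Arguments mu {A} B q.
Arguments folded {A} B.
Arguments mrel {A} B pre p q.

From Stdlib Require Import Relations Classical Lia Wf_nat.

(* Cancelling a backtrack [.., a, e, omega(c), e^-1, b, ..] -> [.., a alpha(c) b, ..]
   shortens an A-path, so every valid A-path reduces to a reduced one.  These reductions
   commute with "twisting" a path by edge-group elements and are locally confluent up to
   twisting, so by Newman's lemma two equivalent reduced A-paths are twists of each other
   (the normal form theorem for graphs of groups); conversely twists are equivalent.
   For folded B, mu sends reduced B-paths to reduced A-paths: by the two folding
   conditions a backtrack in mu(q) can only come from a backtrack in q.  Hence a reduced
   p is equivalent to mu(q) iff p is a twist of mu(q), and the latter unfolds to the
   equations of the theorem. *)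

Create HintDb grp.
#[export] Hint Resolve gmul_in ginv_in gone_in : grp.
Ltac gmem := solve [auto 40 with grp].

Section GroupLaws.
Variables (X : Type) (G : grp_on X).

Lemma gmulgV x : gin G x -> gmul G x (ginv G x) = gone G.
Proof.
  intros Hx.
  rewrite <- (gmul1g _ G (gmul G x (ginv G x))) by gmem.
  rewrite <- (gmulVg _ G (ginv G x)) at 1 by gmem.
  rewrite <- gmulA, (gmulA _ G (ginv G x) x), gmulVg, gmul1g by gmem.
  apply gmulVg; gmem.
Qed.

Lemma gmulg1 x : gin G x -> gmul G x (gone G) = x.
Proof.
  intros Hx. rewrite <- (gmulVg _ G x), gmulA, gmulgV by gmem. apply gmul1g; auto.
Qed.

Lemma gmulKg x y : gin G x -> gin G y -> gmul G (ginv G x) (gmul G x y) = y.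
Proof. intros. rewrite gmulA, gmulVg by gmem. apply gmul1g; auto. Qed.

Lemma gmulKVg x y : gin G x -> gin G y -> gmul G x (gmul G (ginv G x) y) = y.
Proof. intros. rewrite gmulA, gmulgV by gmem. apply gmul1g; auto. Qed.

Lemma gmul_cancel_l x y z :
  gin G x -> gin G y -> gin G z -> gmul G x y = gmul G x z -> y = z.
Proof. intros Hx Hy Hz H. rewrite <- (gmulKg x y), <- (gmulKg x z), H by auto. reflexivity. Qed.

Lemma ginv_unique x y : gin G x -> gin G y -> gmul G x y = gone G -> y = ginv G x.
Proof. intros Hx Hy H. apply (gmul_cancel_l x); try gmem. rewrite H, gmulgV; auto. Qed.

Lemma ginvK x : gin G x -> ginv G (ginv G x) = x.
Proof. intros. symmetry. apply ginv_unique; try gmem. apply gmulVg; auto. Qed.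

Lemma ginv1 : ginv G (gone G) = gone G.
Proof. symmetry. apply ginv_unique; try gmem. apply gmul1g; gmem. Qed.

Lemma ginvM x y : gin G x -> gin G y ->
  ginv G (gmul G x y) = gmul G (ginv G y) (ginv G x).
Proof.
  intros. symmetry. apply ginv_unique; try gmem.
  rewrite <- gmulA, (gmulA _ G y), gmulgV, gmul1g by gmem. apply gmulgV; auto.
Qed.

End GroupLaws.

Ltac gsimpl := try unfold st; repeat (first
  [ rewrite <- gmulA by gmem
  | rewrite gmulKg by gmem
  | rewrite gmulKVg by gmem
  | rewrite gmulgV by gmem
  | rewrite gmulVg by gmem
  | rewrite gmul1g by gmem
  | rewrite gmulg1 by gmem
  | rewrite ginvM by gmem
  | rewrite ginvK by gmem
  | rewrite ginv1 ]).

Section Monomorphisms.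
Variables (X Y : Type) (H : grp_on Y) (G : grp_on X) (f : Y -> X).
Hypothesis f_mono : is_mono H G f.

Lemma mono_one : f (gone H) = gone G.
Proof.
  destruct f_mono as [f_in [f_mul _]].
  assert (H1 : gin G (f (gone H))) by (apply f_in; gmem).
  apply (gmul_cancel_l _ G (f (gone H))); try gmem.
  rewrite <- f_mul, gmul1g, gmulg1 by gmem. reflexivity.
Qed.

Lemma mono_inv y : gin H y -> f (ginv H y) = ginv G (f y).
Proof.
  destruct f_mono as [f_in [f_mul _]]. intros Hy.
  apply ginv_unique; try (apply f_in; gmem).
  rewrite <- f_mul, gmulgV by gmem. apply mono_one.
Qed.

End Monomorphisms.

Arguments mono_one {X Y H G f} f_mono.
Arguments mono_inv {X Y H G f} f_mono y _.

Section GraphOfGroups.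
Variable A : graph_of_groups.

Lemma omega_mono (e : sE A) : is_mono (Ae e) (Av (st e)) (omega e).
Proof. pose proof (alpha_mono A (sinv e)) as H. rewrite Ae_inv in H. exact H. Qed.

Lemma alpha_in (e : sE A) c : gin (Ae e) c -> gin (Av (so e)) (alpha e c).
Proof. apply (alpha_mono A e). Qed.

Lemma omega_in (e : sE A) c : gin (Ae e) c -> gin (Av (st e)) (omega e c).
Proof. apply omega_mono. Qed.

Lemma alphaM (e : sE A) c d : gin (Ae e) c -> gin (Ae e) d ->
  alpha e (gmul (Ae e) c d) = gmul (Av (so e)) (alpha e c) (alpha e d).
Proof. apply (alpha_mono A e). Qed.

Lemma omegaM (e : sE A) c d : gin (Ae e) c -> gin (Ae e) d ->
  omega e (gmul (Ae e) c d) = gmul (Av (st e)) (omega e c) (omega e d).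
Proof. apply omega_mono. Qed.

Lemma omega_inj (e : sE A) c d :
  gin (Ae e) c -> gin (Ae e) d -> omega e c = omega e d -> c = d.
Proof. apply omega_mono. Qed.

Lemma omega_sinv (e : sE A) : omega (sinv e) = alpha e.
Proof. unfold omega. rewrite sinvK. reflexivity. Qed.

Lemma st_sinv (e : sE A) : st (sinv e) = so e.
Proof. unfold st. rewrite sinvK. reflexivity. Qed.

End GraphOfGroups.

#[export] Hint Resolve alpha_in omega_in : grp.
(* [st e] unfolds to [so (sinv e)]; fold it back so that hints stated with [st] apply. *)
#[export] Hint Extern 1 (gin _ _) =>
  match goal with |- context [so (sinv ?e)] => change (so (sinv e)) with (st e) end : grp.

Fixpoint plen {V E X : Type} (p : gpath V E X) : nat :=
  match p with PNil _ _ => 0 | PCons _ _ p' => S (plen p') end.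

Definition phead {V E X : Type} (p : gpath V E X) : X :=
  match p with PNil _ x => x | PCons x _ _ => x end.

Section PheadMap.
Variables (V E X : Type).
Implicit Types (h : X -> X) (p : gpath V E X).

Lemma phead_map_comp h1 h2 p :
  phead_map h1 (phead_map h2 p) = phead_map (fun x => h1 (h2 x)) p.
Proof. destruct p; reflexivity. Qed.

Lemma phead_map_ext h1 h2 p : h1 (phead p) = h2 (phead p) -> phead_map h1 p = phead_map h2 p.
Proof. destruct p; simpl; intros H; rewrite H; reflexivity. Qed.

Lemma pstart_phead_map (o : E -> V) h p : pstart o (phead_map h p) = pstart o p.
Proof. destruct p; reflexivity. Qed.

Lemma plen_phead_map h p : plen (phead_map h p) = plen p.
Proof. destruct p; reflexivity. Qed.

Lemma phead_map_id p : phead_map (fun x => x) p = p.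
Proof. destruct p; reflexivity. Qed.

End PheadMap.

Section APaths.
Variable A : graph_of_groups.
Local Notation ps p := (pstart (@so (gG A)) p).

Lemma avalid_head (p : apath A) : avalid A p -> gin (Av (ps p)) (phead p).
Proof. destruct p; unfold avalid; simpl; tauto. Qed.

Lemma avalid_phead_map (p : apath A) h :
  avalid A p -> gin (Av (ps p)) (h (phead p)) -> avalid A (phead_map h p).
Proof. destruct p; unfold avalid; simpl; tauto. Qed.

Lemma aelem_props (p s : apath A) : aelem A p s -> avalid A p ->
  avalid A s /\ ps s = ps p /\ plen p = S (S (plen s)).
Proof.
  induction 1 as [a e c r Hc | a e r s H IH]; unfold avalid; simpl.
  - intros [Ha [_ [Hw [Hr Hv]]]].
    assert (Hrs : ps r = so e) by (rewrite Hr; apply st_sinv).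
    pose proof (avalid_head r Hv) as Hh. rewrite Hrs in Hh.
    rewrite pstart_phead_map, plen_phead_map.
    split; auto. apply avalid_phead_map; auto. rewrite Hrs. gmem.
  - intros [Ha [Hr Hv]]. destruct (IH Hv) as [H1 [H2 H3]].
    rewrite H2. auto.
Qed.

(* [twist x p p'] : p' = a_0', e_1, ..., e_k, a_k' arises from p = a_0, e_1, ..., e_k, a_k
   through elements c_i of A_{e_i} as a_0' = x a_0 alpha(c_1),
   a_i' = omega(c_i)^-1 a_i alpha(c_(i+1)) and a_k' = omega(c_k)^-1 a_k. *)
Fixpoint twist (x : VX A) (p p' : apath A) : Prop :=
  match p, p' with
  | PNil v a, PNil v' a' => v = v' /\ a' = gmul (Av v) x a
  | PCons a e r, PCons a' e' r' => e = e' /\ exists c, gin (Ae e) c /\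
        a' = gmul (Av (so e)) x (gmul (Av (so e)) a (alpha e c)) /\
        twist (ginv (Av (st e)) (omega e c)) r r'
  | _, _ => False
  end.

Lemma twist_elem_congr x y p p' : twist x p p' -> x = y -> twist y p p'.
Proof. intros H ->; exact H. Qed.

Lemma twist_props (p : apath A) : forall x p',
  avalid A p -> gin (Av (ps p)) x -> twist x p p' ->
  avalid A p' /\ ps p' = ps p /\ plen p' = plen p.
Proof.
  unfold avalid; induction p as [v a | a e r IH]; intros x p' Hv Hx Hc;
    destruct p' as [v' a' | a' e' r']; simpl in *; try contradiction.
  - destruct Hc as [<- ->]. split; auto. gmem.
  - destruct Hc as [<- [c [Hc [-> Hcr]]]]. destruct Hv as [Ha [Hr Hv]].
    assert (Hy : gin (Av (ps r)) (ginv (Av (st e)) (omega e c))) by (rewrite Hr; gmem).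
    destruct (IH _ _ Hv Hy Hcr) as [H1 [H2 H3]].
    rewrite H2, H3. split; [split; [gmem | auto] | auto].
Qed.

Lemma twist_refl (p : apath A) : forall z,
  avalid A p -> z = gone (Av (ps p)) -> twist z p p.
Proof.
  unfold avalid; induction p as [v a | a e r IH]; intros z Hv Hz; simpl in *; subst z.
  - split; auto. rewrite gmul1g; auto.
  - destruct Hv as [Ha [Hr Hv]]. split; auto.
    exists (gone (Ae e)). split; [gmem|]. split.
    + rewrite (mono_one (alpha_mono A e)). gsimpl. reflexivity.
    + apply IH; auto. rewrite Hr, (mono_one (omega_mono A e)), ginv1. reflexivity.
Qed.

Lemma twist_head (p : apath A) y : avalid A p -> gin (Av (ps p)) y ->
  twist y p (phead_map (gmul (Av (ps p)) y) p).
Proof.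
  unfold avalid; destruct p as [v a | a e r]; intros Hv Hy; simpl in *.
  - split; auto.
  - destruct Hv as [Ha [Hr Hv]]. split; auto.
    exists (gone (Ae e)). split; [gmem|]. split.
    + rewrite (mono_one (alpha_mono A e)). gsimpl. reflexivity.
    + apply twist_refl; auto. rewrite Hr, (mono_one (omega_mono A e)), ginv1. reflexivity.
Qed.

Lemma twist_sym (p : apath A) : forall x p',
  avalid A p -> gin (Av (ps p)) x -> twist x p p' -> twist (ginv (Av (ps p)) x) p' p.
Proof.
  unfold avalid; induction p as [v a | a e r IH]; intros x p' Hv Hx Hc;
    destruct p' as [v' a' | a' e' r']; simpl in *; try contradiction.
  - destruct Hc as [<- ->]. split; auto. gsimpl. reflexivity.
  - destruct Hc as [<- [c [Hc [-> Hcr]]]]. destruct Hv as [Ha [Hr Hv]].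
    split; auto. exists (ginv (Ae e) c). split; [gmem|]. split.
    + rewrite (mono_inv (alpha_mono A e)) by auto. gsimpl. reflexivity.
    + eapply twist_elem_congr.
      { apply (IH (ginv (Av (st e)) (omega e c)) r' Hv); [rewrite Hr; gmem | exact Hcr]. }
      rewrite Hr, (mono_inv (omega_mono A e)) by auto. gsimpl. reflexivity.
Qed.

Lemma twist_trans (p : apath A) : forall x p' x' p'',
  avalid A p -> gin (Av (ps p)) x -> gin (Av (ps p)) x' ->
  twist x p p' -> twist x' p' p'' -> twist (gmul (Av (ps p)) x' x) p p''.
Proof.
  unfold avalid; induction p as [v a | a e r IH]; intros x p' x' p'' Hv Hx Hx' Hc Hc';
    destruct p' as [v' a' | a' e' r']; simpl in *; try contradiction;
    destruct p'' as [v'' a'' | a'' e'' r'']; simpl in *; try contradiction.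
  - destruct Hc as [<- ->]. destruct Hc' as [<- ->]. split; auto. gsimpl. reflexivity.
  - destruct Hc as [<- [c [Hc [-> Hcr]]]]. destruct Hc' as [<- [c' [Hc' [-> Hcr']]]].
    destruct Hv as [Ha [Hr Hv]].
    split; auto. exists (gmul (Ae e) c c'). split; [gmem|]. split.
    + rewrite alphaM by auto. gsimpl. reflexivity.
    + eapply twist_elem_congr.
      { apply (IH (ginv (Av (st e)) (omega e c)) r' (ginv (Av (st e)) (omega e c')) r'' Hv);
          [rewrite Hr; gmem | rewrite Hr; gmem | exact Hcr | exact Hcr']. }
      rewrite Hr, omegaM, ginvM by gmem. reflexivity.
Qed.

Lemma twist_reduced (p : apath A) : forall x p',
  avalid A p -> gin (Av (ps p)) x -> twist x p p' -> areduced A p -> areduced A p'.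
Proof.
  unfold avalid; induction p as [v a | a e r IH]; intros x p' Hv Hx Hc Hred;
    destruct p' as [v' a' | a' e' r']; simpl in *; try contradiction; auto.
  destruct Hc as [<- [c [Hc [-> Hcr]]]]. destruct Hv as [Ha [Hr Hv]].
  destruct Hred as [Hred Hnot]. split.
  - refine (IH _ r' Hv _ Hcr Hred). rewrite Hr; gmem.
  - destruct r as [v0 w | w e2 r0]; destruct r' as [v0' w' | w' e2' r0'];
      simpl in Hcr; try contradiction; auto.
    destruct Hcr as [<- [c2 [Hc2 [Hw' _]]]].
    intros [He2 [d [Hd Hdw]]]. subst e2. apply Hnot. split; auto.
    destruct Hv as [Hw _]. rewrite Ae_inv in Hc2.
    change (alpha (sinv e) c2) with (omega e c2) in Hw'.
    (* if [omega(d)] cancels in p', then [omega(c d c2^-1)] cancels in p *)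
    exists (gmul (Ae e) c (gmul (Ae e) d (ginv (Ae e) c2))). split; [gmem|].
    rewrite !omegaM, (mono_inv (omega_mono A e)) by gmem.
    rewrite <- Hdw, Hw'. simpl in Hw. gsimpl. reflexivity.
Qed.

End APaths.

Section Reduction.
Variable A : graph_of_groups.
Local Notation ps p := (pstart (@so (gG A)) p).

Lemma twist_phead_map (r r' : apath A) y x u u' :
  avalid A r -> gin (Av (ps r)) y -> gin (Av (ps r)) x ->
  gin (Av (ps r)) u -> gin (Av (ps r)) u' ->
  twist A y r r' -> gmul (Av (ps r)) u' y = gmul (Av (ps r)) x u ->
  twist A x (phead_map (gmul (Av (ps r)) u) r) (phead_map (gmul (Av (ps r)) u') r').
Proof.
  unfold avalid; intros Hval Hy Hx Hu Hu' Hc Heq.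
  destruct r as [v a | a e r0]; destruct r' as [v' a' | a' e' r0'];
    simpl in *; try contradiction.
  - destruct Hc as [<- ->]. split; auto.
    rewrite (gmulA _ _ u'), Heq by gmem. gsimpl. reflexivity.
  - destruct Hc as [<- [c [Hc [-> Hcr]]]]. destruct Hval as [Ha _].
    split; auto. exists c. split; auto. split; auto.
    rewrite (gmulA _ _ u'), Heq by gmem. gsimpl. reflexivity.
Qed.

(* A twist of a cancellable [a, e, omega(d), e^-1, r] has the form
   [x a alpha(c1), e, omega(d'), e^-1, r''] with [d' = c1^-1 d c2], so it is again
   cancellable. *)
Lemma twist_aelem_base a e d r x p' :
  avalid A (PCons a e (PCons (omega e d) (sinv e) r)) -> gin (Ae e) d ->
  gin (Av (so e)) x -> twist A x (PCons a e (PCons (omega e d) (sinv e) r)) p' ->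
  exists s', aelem A p' s' /\
    twist A x (phead_map (fun ab => gmul (Av (so e)) a (gmul (Av (so e)) (alpha e d) ab)) r) s'.
Proof.
  unfold avalid; simpl. intros [Ha [_ [Hw [Hr Hv]]]] Hd Hx Hc.
  destruct p' as [v' a' | a' e' r']; simpl in Hc; try tauto.
  destruct Hc as [<- [c1 [Hc1 [Ha' Hcr]]]].
  destruct r' as [v'' m | m e3 r'']; simpl in Hcr; try tauto.
  destruct Hcr as [<- [c2 [Hc2 [Hm Hcr]]]].
  rewrite Ae_inv in Hc2. change (alpha (sinv e) c2) with (omega e c2) in Hm.
  unfold st at 1 in Hcr. rewrite omega_sinv, sinvK in Hcr.
  assert (Hrs : ps r = so e) by (rewrite Hr; apply st_sinv).
  set (d' := gmul (Ae e) (ginv (Ae e) c1) (gmul (Ae e) d c2)).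
  assert (Hd' : gin (Ae e) d') by (unfold d'; gmem).
  assert (Hm' : m = omega e d').
  { unfold d'. rewrite !omegaM, (mono_inv (omega_mono A e)) by gmem. exact Hm. }
  exists (phead_map (fun ab => gmul (Av (so e)) a' (gmul (Av (so e)) (alpha e d') ab)) r'').
  split; [rewrite Hm'; apply AE_base; auto|].
  pose proof (avalid_head A r Hv) as Hh. rewrite Hrs in Hh.
  destruct (twist_props A r (ginv (Av (so e)) (alpha e c2)) r'' Hv ltac:(rewrite Hrs; gmem) Hcr)
    as [Hv'' [Hps'' _]].
  pose proof (avalid_head A r'' Hv'') as Hh''. rewrite Hps'', Hrs in Hh''.
  subst a'.
  rewrite (phead_map_ext _ _ _ _ (gmul (Av (ps r)) (gmul (Av (so e)) a (alpha e d))) r),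
    (phead_map_ext _ _ _ _ (gmul (Av (ps r)) (gmul (Av (so e))
       (gmul (Av (so e)) x (gmul (Av (so e)) a (alpha e c1))) (alpha e d'))) r'')
    by (rewrite Hrs; gsimpl; reflexivity).
  apply (twist_phead_map r r'' (ginv (Av (so e)) (alpha e c2)));
    rewrite ?Hrs; auto; try gmem.
  unfold d'. rewrite !alphaM, (mono_inv (alpha_mono A e)) by gmem. gsimpl. reflexivity.
Qed.

Lemma twist_aelem (p s : apath A) : aelem A p s -> forall x p',
  avalid A p -> gin (Av (ps p)) x -> twist A x p p' ->
  exists s', aelem A p' s' /\ twist A x s s'.
Proof.
  induction 1 as [a e d r Hd | a e r s H IH]; intros x p' Hv Hx Hc.
  - apply twist_aelem_base; auto.
  - destruct p' as [v' a' | a' e' r']; simpl in Hc; try contradiction.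
    destruct Hc as [<- [c [Hc [Ha' Hcr]]]].
    unfold avalid in Hv; simpl in Hv. destruct Hv as [Ha [Hr Hv]].
    destruct (IH (ginv (Av (st e)) (omega e c)) r' Hv ltac:(rewrite Hr; gmem) Hcr)
      as [s' [Hs' Hcs']].
    exists (PCons a' e s'). split; [apply AE_cons; auto|].
    simpl. split; auto. exists c. auto.
Qed.

Definition areduction (p s : apath A) : Prop := avalid A p /\ aelem A p s.
Definition areduces : relation (apath A) := clos_refl_trans_1n _ areduction.
Definition twist_eq (p q : apath A) : Prop := twist A (gone (Av (ps p))) p q.

Lemma areduces_props p m : areduces p m -> avalid A p ->
  avalid A m /\ ps m = ps p /\ plen m <= plen p.
Proof.
  induction 1 as [|x y z [Hx Hxy] Hyz IH]; intros Hv; auto.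
  destruct (aelem_props A _ _ Hxy Hv) as [H1 [H2 H3]].
  destruct (IH H1) as [H4 [H5 H6]]. split; [|split]; auto. congruence. lia.
Qed.

Lemma areduces_trans p s m : areduces p s -> areduces s m -> areduces p m.
Proof.
  intros H1 H2. apply clos_rt_rt1n. apply rt_trans with s; apply clos_rt1n_rt; auto.
Qed.

Lemma areduces_cons a e r r' : areduces r r' -> avalid A r ->
  gin (Av (so e)) a -> ps r = st e -> areduces (PCons a e r) (PCons a e r').
Proof.
  induction 1 as [|x y z [Hx Hxy] Hyz IH]; intros Hv Ha Hps.
  - apply rt1n_refl.
  - destruct (aelem_props A _ _ Hxy Hv) as [H1 [H2 _]].
    apply (Relation_Operators.rt1n_trans _ _ _ (PCons a e y)).
    + split; [|apply AE_cons; auto]. unfold avalid; simpl; auto.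
    + apply IH; auto. congruence.
Qed.

Lemma twist_eq_props p q : avalid A p -> twist_eq p q ->
  avalid A q /\ ps q = ps p /\ plen q = plen p.
Proof. intros Hv H. apply (twist_props A p (gone (Av (ps p))) q Hv); auto. gmem. Qed.

Lemma twist_eq_refl p : avalid A p -> twist_eq p p.
Proof. intros. apply twist_refl; auto. Qed.

Lemma twist_eq_sym p q : avalid A p -> twist_eq p q -> twist_eq q p.
Proof.
  intros Hv H. destruct (twist_eq_props p q Hv H) as [_ [Hps _]].
  unfold twist_eq. eapply twist_elem_congr.
  - apply (twist_sym A p (gone (Av (ps p))) q Hv); auto. gmem.
  - rewrite Hps, ginv1. reflexivity.
Qed.

Lemma twist_eq_trans p q r : avalid A p -> twist_eq p q -> twist_eq q r -> twist_eq p r.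
Proof.
  intros Hv H1 H2. destruct (twist_eq_props p q Hv H1) as [_ [Hps _]].
  unfold twist_eq in *. rewrite Hps in H2. eapply twist_elem_congr.
  - apply (twist_trans A p (gone (Av (ps p))) q (gone (Av (ps p))) r Hv); auto; gmem.
  - gsimpl. reflexivity.
Qed.

Lemma twist_eq_cons a e t1 t2 : ps t1 = st e -> gin (Av (so e)) a ->
  twist_eq t1 t2 -> twist_eq (PCons a e t1) (PCons a e t2).
Proof.
  intros Hps Ha H. unfold twist_eq in *. simpl. split; auto.
  exists (gone (Ae e)). split; [gmem|]. split.
  - rewrite (mono_one (alpha_mono A e)). gsimpl. reflexivity.
  - eapply twist_elem_congr; [exact H|].
    rewrite Hps, (mono_one (omega_mono A e)), ginv1. reflexivity.
Qed.

Lemma twist_eq_reduced p p' : avalid A p -> twist_eq p p' -> areduced A p -> areduced A p'.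
Proof. intros Hv H Hr. apply (twist_reduced A p (gone (Av (ps p))) p' Hv); auto. gmem. Qed.

Lemma aelem_phead_map r r2 u : avalid A r -> gin (Av (ps r)) u -> aelem A r r2 ->
  aelem A (phead_map (gmul (Av (ps r)) u) r) (phead_map (gmul (Av (ps r)) u) r2).
Proof.
  intros Hval Hu H. destruct H as [b e d r4 Hd | b e r5 r6 H]; simpl in *.
  - unfold avalid in Hval; simpl in Hval. destruct Hval as [Hb [_ [_ [Hr4 Hv4]]]].
    pose proof (avalid_head A r4 Hv4) as Hh. rewrite Hr4, st_sinv in Hh.
    rewrite phead_map_comp.
    rewrite (phead_map_ext _ _ _ _ (fun ab => gmul (Av (so e)) (gmul (Av (so e)) u b)
               (gmul (Av (so e)) (alpha e d) ab)) r4) by (gsimpl; reflexivity).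
    apply AE_base; auto.
  - apply AE_cons; auto.
Qed.

(* The results [a alpha(d) alpha(c), e, p] and [a, e, omega(d) omega(c) p] of the two
   overlapping cancellations in [a, e, omega(d), e^-1, alpha(c), e, p] differ by the
   twist by [d c]. *)
Lemma twist_eq_overlap a e d c p :
  gin (Av (so e)) a -> gin (Ae e) d -> gin (Ae e) c -> avalid A p -> ps p = st e ->
  twist_eq (PCons (gmul (Av (so e)) a (gmul (Av (so e)) (alpha e d) (alpha e c))) e p)
    (PCons a e
       (phead_map (fun x => gmul (Av (st e)) (omega e d) (gmul (Av (st e)) (omega e c) x)) p)).
Proof.
  intros Ha Hd Hc Hv Hp. pose proof (avalid_head A p Hv) as Hh. rewrite Hp in Hh.
  unfold twist_eq; simpl. split; auto.
  exists (ginv (Ae e) (gmul (Ae e) d c)). split; [gmem|]. split.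
  - rewrite (mono_inv (alpha_mono A e)), alphaM by gmem. gsimpl. reflexivity.
  - eapply twist_elem_congr.
    + rewrite (phead_map_ext _ _ _ _
        (gmul (Av (ps p)) (gmul (Av (st e)) (omega e d) (omega e c))) p)
        by (rewrite Hp; gsimpl; reflexivity).
      apply twist_head; auto. rewrite Hp. gmem.
    + rewrite (mono_inv (omega_mono A e)), omegaM by gmem. gsimpl. reflexivity.
Qed.

Lemma local_confluence_base a e d r s2 :
  avalid A (PCons a e (PCons (omega e d) (sinv e) r)) -> gin (Ae e) d ->
  aelem A (PCons a e (PCons (omega e d) (sinv e) r)) s2 ->
  exists t1 t2,
    areduces (phead_map (fun ab => gmul (Av (so e)) a (gmul (Av (so e)) (alpha e d) ab)) r) t1
    /\ areduces s2 t2 /\ twist_eq t1 t2.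
Proof.
  intros Hv Hd Hs2.
  destruct (aelem_props A _ _ (AE_base A a e d r Hd) Hv) as [Hv1 _].
  unfold avalid in Hv; simpl in Hv. destruct Hv as [Ha [_ [Hw [Hr Hv]]]].
  assert (Hrs : ps r = so e) by (rewrite Hr; apply st_sinv).
  pose proof (avalid_head A r Hv) as Hh. rewrite Hrs in Hh.
  remember (PCons a e (PCons (omega e d) (sinv e) r)) as p eqn:Hp.
  destruct Hs2 as [a0 e0 c0 p0 Hc0 | a0 e0 p0 q0 H0]; injection Hp; intros; subst.
  - (* the same cancellation *)
    match goal with H : omega _ _ = omega _ _ |- _ => apply omega_inj in H; auto end.
    subst. eexists; eexists. split; [apply rt1n_refl|]. split; [apply rt1n_refl|].
    apply twist_eq_refl; auto.
  - remember (PCons (omega e d) (sinv e) r) as p1 eqn:Hp1.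
    destruct H0 as [a1 e1 c1 p2 Hc1 | a1 e1 p2 q2 H2]; injection Hp1; intros; subst.
    + (* overlapping cancellations [e, omega(d), e^-1, alpha(c1), e] *)
      unfold avalid in Hv; simpl in Hv. destruct Hv as [Hw1 [Hp2 Hv2]].
      rewrite Ae_inv in Hc1. rewrite omega_sinv, sinvK in *.
      eexists; eexists. split; [apply rt1n_refl|]. split; [apply rt1n_refl|].
      apply twist_eq_overlap; auto.
    + (* disjoint redexes *)
      destruct (aelem_props A _ _ H2 Hv) as [Hv2 [Hps2 _]].
      pose proof (avalid_head A q2 Hv2) as Hh2. rewrite Hps2, Hrs in Hh2.
      set (u := gmul (Av (so e)) a (alpha e d)).
      assert (Hu : forall t : apath A, gin (Av (so e)) (phead t) ->
        phead_map (gmul (Av (so e)) u) t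
        = phead_map (fun ab => gmul (Av (so e)) a (gmul (Av (so e)) (alpha e d) ab)) t).
      { intros t Ht. apply phead_map_ext. unfold u. gsimpl. reflexivity. }
      exists (phead_map (gmul (Av (so e)) u) q2), (phead_map (gmul (Av (so e)) u) q2).
      split; [|split].
      * apply clos_rt_rt1n, rt_step.
        rewrite <- Hu, <- Hrs by auto. split.
        -- apply avalid_phead_map; auto. rewrite Hrs. unfold u. gmem.
        -- apply aelem_phead_map; auto. rewrite Hrs. unfold u. gmem.
      * apply clos_rt_rt1n, rt_step. split.
        -- unfold avalid; simpl. rewrite Hps2. auto 6.
        -- rewrite Hu by auto. apply AE_base; auto.
      * apply twist_eq_refl. apply avalid_phead_map; auto.
        rewrite Hps2, Hrs. unfold u. gmem.
Qed.

End Reduction.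

Section NormalForms.
Variable A : graph_of_groups.
Local Notation ps p := (pstart (@so (gG A)) p).
Local Notation areduces := (areduces A).
Local Notation twist_eq := (twist_eq A).

Lemma local_confluence p s1 s2 : avalid A p -> aelem A p s1 -> aelem A p s2 ->
  exists t1 t2, areduces s1 t1 /\ areduces s2 t2 /\ twist_eq t1 t2.
Proof.
  intros Hv H1. revert s2 Hv.
  induction H1 as [a e d r Hd | a e r s H IH]; intros s2 Hv Hs2.
  - apply local_confluence_base; auto.
  - remember (PCons a e r) as p eqn:Hp.
    destruct Hs2 as [a0 e0 c0 p0 Hc0 | a0 e0 p0 q0 H0]; injection Hp; intros; subst.
    + destruct (local_confluence_base A a e c0 p0 (PCons a e s) Hv Hc0 (AE_cons A _ _ _ _ H))
        as [t1 [t2 [H1 [H2 H3]]]].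
      exists t2, t1. split; [|split]; auto.
      apply twist_eq_sym; auto.
      destruct (aelem_props A _ _ (AE_base A a e c0 p0 Hc0) Hv) as [Hv' _].
      apply (areduces_props A _ _ H1 Hv').
    + unfold avalid in Hv; simpl in Hv. destruct Hv as [Ha [Hr Hv]].
      destruct (IH q0 Hv H0) as [t1 [t2 [H1 [H2 H3]]]].
      destruct (aelem_props A _ _ H Hv) as [Hvs [Hpss _]].
      destruct (aelem_props A _ _ H0 Hv) as [Hvq [Hpsq _]].
      destruct (areduces_props A _ _ H1 Hvs) as [_ [Hpst1 _]].
      exists (PCons a e t1), (PCons a e t2). split; [|split].
      * apply areduces_cons; auto. congruence.
      * apply areduces_cons; auto. congruence.
      * apply twist_eq_cons; auto. congruence.
Qed.

Lemma areduced_no_aelem p s : aelem A p s -> ~ areduced A p.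
Proof.
  induction 1 as [a e c r Hc | a e r s H IH]; simpl.
  - intros [_ Hn]. apply Hn. split; auto. exists c; auto.
  - intros [H1 _]. auto.
Qed.

Lemma areduced_or_aelem (p : apath A) : areduced A p \/ exists s, aelem A p s.
Proof.
  induction p as [v a | a e r [Hr | [s Hs]]].
  - left. exact I.
  - destruct r as [v w | w e' r0]; [left; simpl; auto|].
    destruct (classic (e' = sinv e /\ exists c, gin (Ae e) c /\ w = omega e c))
      as [[He [c [Hc Hw]]] | Hn].
    + right. subst. eexists. apply AE_base; auto.
    + left. simpl. auto.
  - right. exists (PCons a e s). apply AE_cons; auto.
Qed.

Lemma areduces_to_reduced p : avalid A p -> exists m, areduces p m /\ areduced A m.
Proof.
  induction p as [p IH] using (well_founded_induction (well_founded_ltof _ plen)).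
  intros Hv. destruct (areduced_or_aelem p) as [Hr | [s Hs]].
  - exists p. split; auto. apply rt1n_refl.
  - destruct (aelem_props A _ _ Hs Hv) as [Hv' [_ Hl]].
    destruct (IH s ltac:(unfold ltof; lia) Hv') as [m [H1 H2]].
    exists m. split; auto. apply Relation_Operators.rt1n_trans with s; auto. split; auto.
Qed.

(* Newman's lemma modulo [twist_eq]: reductions terminate (they shorten paths),
   are locally confluent up to twisting, and commute with twisting. *)
Lemma reduced_forms_twist_eq p : forall p' m m', avalid A p -> twist_eq p p' ->
  areduces p m -> areduced A m -> areduces p' m' -> areduced A m' -> twist_eq m m'.
Proof.
  induction p as [p IH] using (well_founded_induction (well_founded_ltof _ plen)).
  intros p' m m' Hv He Hm Hmr Hm' Hmr'.
  destruct (twist_eq_props A p p' Hv He) as [Hv' [Hps' Hl']].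
  destruct Hm as [|s m [_ Hs] Hsm].
  - assert (Hr' : areduced A p') by (apply (twist_eq_reduced A p); auto).
    destruct Hm' as [|s' m' [_ Hs'] _]; auto.
    exfalso. eapply areduced_no_aelem; eauto.
  - destruct (twist_aelem A p s Hs (gone (Av (ps p))) p' Hv ltac:(gmem) He)
      as [s'' [Hs'' Hss'']].
    destruct (aelem_props A _ _ Hs Hv) as [Hvs [Hpss Hls]].
    destruct (aelem_props A _ _ Hs'' Hv') as [Hvs'' [_ Hls'']].
    assert (Hes : twist_eq s s'') by (unfold twist_eq; rewrite Hpss; exact Hss'').
    destruct Hm' as [|s' m' [_ Hs'] Hs'm'].
    { exfalso. eapply areduced_no_aelem; eauto. }
    destruct (aelem_props A _ _ Hs' Hv') as [Hvs' [_ Hls']].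
    destruct (local_confluence p' s'' s' Hv' Hs'' Hs') as [t1 [t2 [Ht1 [Ht2 Het]]]].
    destruct (areduces_props A _ _ Ht1 Hvs'') as [Hvt1 [_ Hlt1]].
    destruct (areduces_props A _ _ Ht2 Hvs') as [Hvt2 [_ Hlt2]].
    destruct (areduces_to_reduced t1 Hvt1) as [m1 [Hm1 Hm1r]].
    destruct (areduces_to_reduced t2 Hvt2) as [m2 [Hm2 Hm2r]].
    destruct (areduces_props A _ _ Hsm Hvs) as [Hvm _].
    destruct (areduces_props A _ _ Hm1 Hvt1) as [Hvm1 _].
    destruct (areduces_props A _ _ Hm2 Hvt2) as [Hvm2 _].
    apply (twist_eq_trans A _ m1); auto.
    { apply (IH s ltac:(unfold ltof; lia) s''); auto. apply (areduces_trans A _ t1); auto. }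
    apply (twist_eq_trans A _ m2); auto.
    { apply (IH t1 ltac:(unfold ltof; lia) t2); auto. }
    apply (IH s' ltac:(unfold ltof; lia) s'); auto.
    + apply twist_eq_refl; auto.
    + apply (areduces_trans A _ t2); auto.
Qed.

Lemma aequiv_valid x y : aequiv A x y -> (avalid A x <-> avalid A y).
Proof. induction 1 as [x y [H1 [H2 _]] | | | ]; tauto. Qed.

Lemma aequiv_reduced_forms x y : aequiv A x y -> avalid A x -> forall m m',
  areduces x m -> areduced A m -> areduces y m' -> areduced A m' -> twist_eq m m'.
Proof.
  induction 1 as [x y [H1 [H2 H3]] | x | x y Hxy IH | x y z Hxy IH1 Hyz IH2];
    intros Hv m m' Hm Hmr Hm' Hmr'.
  - apply (reduced_forms_twist_eq x x m m'); auto.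
    + apply twist_eq_refl; auto.
    + apply Relation_Operators.rt1n_trans with y; auto. split; auto.
  - apply (reduced_forms_twist_eq x x m m'); auto. apply twist_eq_refl; auto.
  - assert (Hvx : avalid A x) by (apply (aequiv_valid x y Hxy); auto).
    apply twist_eq_sym; [apply (areduces_props A _ _ Hm' Hvx) | apply IH; auto].
  - assert (Hvy : avalid A y) by (apply (aequiv_valid x y Hxy); auto).
    destruct (areduces_to_reduced y Hvy) as [my [Hmy Hmyr]].
    apply (twist_eq_trans A _ my); [apply (areduces_props A _ _ Hm Hv) | apply IH1 | apply IH2];
      auto.
Qed.

Theorem aequiv_reduced_twist_eq p p' : aequiv A p p' -> avalid A p ->
  areduced A p -> areduced A p' -> twist_eq p p'.
Proof.
  intros H Hv Hr Hr'. apply (aequiv_reduced_forms p p' H Hv); auto; apply rt1n_refl.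
Qed.

End NormalForms.

Section Equivalence.
Variable A : graph_of_groups.
Local Notation ps p := (pstart (@so (gG A)) p).

Lemma aequiv_aelem x y : avalid A x -> aelem A x y -> aequiv A x y.
Proof.
  intros Hv H. apply rst_step. split; [|split]; auto. apply (aelem_props A _ _ H Hv).
Qed.

Lemma aequiv_pstart x y : aequiv A x y -> avalid A x -> ps x = ps y.
Proof.
  induction 1 as [x y [H1 [H2 H3]] | x | x y Hxy IH | x y z Hxy IH1 Hyz IH2]; intros Hv.
  - symmetry. apply (aelem_props A _ _ H3 H1).
  - reflexivity.
  - symmetry. apply IH. apply (aequiv_valid A x y Hxy); auto.
  - rewrite IH1 by auto. apply IH2. apply (aequiv_valid A x y Hxy); auto.
Qed.

Lemma aequiv_cons a e r r' : aequiv A r r' -> gin (Av (so e)) a -> avalid A r ->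
  ps r = st e -> aequiv A (PCons a e r) (PCons a e r').
Proof.
  intros H Ha.
  induction H as [x y [H1 [H2 H3]] | x | x y Hxy IH | x y z Hxy IH1 Hyz IH2];
    intros Hv Hps.
  - apply aequiv_aelem; [unfold avalid; simpl; auto | apply AE_cons; auto].
  - apply rst_refl.
  - assert (Hvx : avalid A x) by (apply (aequiv_valid A x y Hxy); auto).
    apply rst_sym, IH; auto. rewrite (aequiv_pstart x y); auto.
  - assert (Hvy : avalid A y) by (apply (aequiv_valid A x y Hxy); auto).
    apply rst_trans with (PCons a e y); [apply IH1 | apply IH2]; auto.
    rewrite <- (aequiv_pstart x y); auto.
Qed.

(* Both sides arise by one cancellation from [a, e, omega(c), e^-1, 1, e, omega(c)^-1 r]. *)
Lemma aequiv_shift a e r c : avalid A (PCons a e r) -> gin (Ae e) c ->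
  aequiv A (PCons a e r)
    (PCons (gmul (Av (so e)) a (alpha e c)) e
       (phead_map (gmul (Av (st e)) (ginv (Av (st e)) (omega e c))) r)).
Proof.
  intros Hv Hc. unfold avalid in Hv; simpl in Hv.
  destruct Hv as [Ha [Hr Hv]].
  pose proof (avalid_head A r Hv) as Hh. rewrite Hr in Hh.
  set (one := gone (Ae (sinv e))).
  set (r' := phead_map (gmul (Av (st e)) (ginv (Av (st e)) (omega e c))) r).
  set (P := PCons a e (PCons (omega e c) (sinv e)
              (PCons (omega (sinv e) one) (sinv (sinv e)) r'))).
  assert (HvP : avalid A P).
  { unfold P, avalid; simpl. split; auto. split; auto. split; [gmem|]. split; auto. split.
    - unfold one. rewrite omega_sinv, sinvK, Ae_inv. gmem.
    - unfold r'. rewrite pstart_phead_map, Hr. split.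
      + unfold st at 2. rewrite sinvK. reflexivity.
      + apply avalid_phead_map; auto. rewrite Hr. gmem. }
  apply rst_trans with P.
  - apply rst_sym, aequiv_aelem; auto.
    replace (PCons a e r) with
      (PCons a e (phead_map (fun ab => gmul (Av (so (sinv e))) (omega e c)
                    (gmul (Av (so (sinv e))) (alpha (sinv e) one) ab)) r')).
    + unfold P. apply AE_cons, AE_base. unfold one. gmem.
    + f_equal. unfold r', one. rewrite (mono_one (alpha_mono A (sinv e))).
      destruct r; simpl in *; f_equal; gsimpl; reflexivity.
  - apply aequiv_aelem; auto.
    replace (PCons (gmul (Av (so e)) a (alpha e c)) e r') with
      (phead_map (fun ab => gmul (Av (so e)) a (gmul (Av (so e)) (alpha e c) ab))
        (PCons (omega (sinv e) one) (sinv (sinv e)) r')).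
    + unfold P. apply AE_base; auto.
    + simpl. rewrite sinvK. f_equal. unfold one.
      rewrite omega_sinv, Ae_inv, (mono_one (alpha_mono A e)). gsimpl. reflexivity.
Qed.

Lemma twist_aequiv (p : apath A) : forall x p',
  avalid A p -> gin (Av (ps p)) x -> twist A x p p' ->
  aequiv A (phead_map (gmul (Av (ps p)) x) p) p'.
Proof.
  induction p as [v a | a e r IH]; intros x p' Hv Hx Hc;
    destruct p' as [v' a' | a' e' r']; simpl in *; try contradiction.
  - destruct Hc as [<- ->]. apply rst_refl.
  - destruct Hc as [<- [c [Hc [-> Hcr]]]].
    unfold avalid in Hv; simpl in Hv. destruct Hv as [Ha [Hr Hv]].
    eapply rst_trans.
    + apply (aequiv_shift _ _ _ c); auto. unfold avalid; simpl. split; [gmem | auto].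
    + rewrite <- gmulA by gmem. apply aequiv_cons; try gmem.
      * assert (Hy : gin (Av (ps r)) (ginv (Av (st e)) (omega e c))) by (rewrite Hr; gmem).
        pose proof (IH _ r' Hv Hy Hcr) as IHr. rewrite Hr in IHr. exact IHr.
      * pose proof (avalid_head A r Hv) as Hh.
        apply avalid_phead_map; auto. rewrite Hr in *. gmem.
      * rewrite pstart_phead_map. auto.
Qed.

Lemma twist_eq_aequiv p p' : avalid A p -> twist_eq A p p' -> aequiv A p p'.
Proof.
  intros Hv H. pose proof (twist_aequiv p _ p' Hv ltac:(gmem) H) as Hp.
  rewrite (phead_map_ext _ _ _ _ (fun x => x)), phead_map_id in Hp; [exact Hp|].
  pose proof (avalid_head A p Hv). gsimpl. reflexivity.
Qed.

End Equivalence.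

Section FoldedAGraph.
Variables (A : graph_of_groups) (B : agraph A).
Local Notation ps p := (pstart (@so (gG A)) p).
Local Notation qs q := (pstart (@so (bG A B)) q).

Lemma Bv_in u b : Bv B u b -> gin (Av (vmap B u)) b.
Proof. apply (Bv_sub A B u). Qed.

Lemma st_emap f : st (emap B f) = vmap B (st f).
Proof. unfold st. rewrite <- emap_inv. apply emap_o. Qed.

Lemma alpha_emap_in f c :
  gin (Ae (emap B f)) c -> gin (Av (vmap B (so f))) (alpha (emap B f) c).
Proof. rewrite <- emap_o. apply alpha_in. Qed.

Local Hint Resolve Bv_in fa_in fw_in alpha_emap_in : grp.

Lemma pstart_mu_from pre q : ps (mu_from A B pre q) = vmap B (qs q).
Proof. destruct q; simpl; [reflexivity | apply emap_o]. Qed.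

Lemma mu_from_valid q : forall u, bvalid B q -> gin (Av (vmap B (qs q))) u ->
  avalid A (mu_from A B (Some u) q).
Proof.
  unfold bvalid, avalid; induction q as [ub b | b f q' IH]; intros u Hq Hu; simpl in *.
  - gmem.
  - destruct Hq as [Hb [Hq' Hq]]. rewrite emap_o, pstart_mu_from, Hq', st_emap.
    split; [gmem|]. split; [reflexivity|]. apply IH; auto. rewrite Hq'. gmem.
Qed.

Lemma mu_valid q : bvalid B q -> avalid A (mu B q).
Proof.
  unfold bvalid, avalid, mu; destruct q as [ub b | b f q']; intros Hq; simpl in *.
  - gmem.
  - destruct Hq as [Hb [Hq' Hq]]. rewrite emap_o, pstart_mu_from, Hq', st_emap.
    split; [gmem|]. split; [reflexivity|]. apply mu_from_valid; auto. rewrite Hq'. gmem.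
Qed.

(* Folding condition (1) forces the two edges to be inverse, and condition (2)
   puts the connecting element into the image of the edge group [B_f]. *)
Lemma folded_backtrack f f' b' c : folded B ->
  so f' = st f -> Bv B (st f) b' -> emap B f' = sinv (emap B f) ->
  gin (Ae (emap B f)) c ->
  gmul (Av (vmap B (st f))) (gmul (Av (vmap B (st f))) (fw B f) b') (fa B f')
    = omega (emap B f) c ->
  f' = sinv f /\ exists c', Bedge A B f c' /\ b' = omegaB A B f c'.
Proof.
  intros [F1 F2] Hso Hb He Hc Hw.
  pose proof (fa_in A B f') as Hfa. rewrite Hso in Hfa.
  assert (Hf' : f' = sinv f).
  { apply NNPP. intros Hne. apply F1.
    exists (sinv f), f', (ginv (Av (vmap B (st f))) b'), c.
    split; [auto|]. split; [auto|]. split; [rewrite emap_inv; auto|].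
    split; [rewrite emap_inv, Ae_inv; auto|]. split.
    - apply (Bv_sub A B (st f)); auto.
    - rewrite fa_inv, emap_inv. change (alpha (sinv (emap B f)) c) with (omega (emap B f) c).
      rewrite <- Hw. unfold st in *. gsimpl. reflexivity. }
  subst f'. split; [reflexivity|].
  assert (Hpo : preim_omega A B f c).
  { split; auto. exists b'. split; auto.
    rewrite <- Hw, fa_inv. unfold st in *. gsimpl. reflexivity. }
  assert (Hpa : preim_alpha A B f c).
  { apply NNPP. intros Hn. apply F2. exists f. intros Hall. apply Hn, Hall, Hpo. }
  exists c. split; [split; auto|].
  unfold omegaB. rewrite <- Hw, fa_inv. unfold st in *. gsimpl. reflexivity.
Qed.

Lemma mu_reduced q : folded B -> forall pre, bvalid B q -> breduced B q ->
  areduced A (mu_from A B pre q).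
Proof.
  intros Hfold.
  unfold bvalid; induction q as [ub b | b f q' IH]; intros pre Hq Hred; simpl in *; auto.
  destruct Hq as [Hb [Hq' Hq]]. destruct Hred as [Hred Hnot]. split; [apply IH; auto|].
  destruct q' as [u b' | b' f' q'']; simpl in *; auto.
  intros [He [c [Hc Hw]]]. destruct Hq as [Hb' _].
  rewrite Hq' in Hw, Hb'.
  destruct (folded_backtrack f f' b' c Hfold Hq' Hb' He Hc Hw) as [-> Hc'].
  apply Hnot. auto.
Qed.

Lemma mrel_Some_twist q : forall p x u, bvalid B q ->
  gin (Av (vmap B (qs q))) x -> gin (Av (vmap B (qs q))) u ->
  (mrel B (Some (gmul (Av (vmap B (qs q))) x u)) p q <->
   twist A x (mu_from A B (Some u) q) p).
Proof.
  unfold bvalid; induction q as [ub b | b f q' IH]; intros p x u Hq Hx Hu;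
    destruct p as [v a | a e r]; simpl in *; try tauto.
  - split; intros [<- ->]; split; auto; gsimpl; reflexivity.
  - destruct Hq as [Hb [Hq' Hq]].
    split; intros [<- [c [Hc [-> Hm]]]]; split; auto; exists c; split; auto;
      rewrite emap_o; (split; [gsimpl; reflexivity|]);
      assert (Hx' : gin (Av (vmap B (qs q'))) (ginv (Av (st (emap B f))) (omega (emap B f) c)))
        by (rewrite Hq', <- st_emap; gmem);
      assert (Hu' : gin (Av (vmap B (qs q'))) (fw B f)) by (rewrite Hq'; gmem);
      pose proof (IH r _ _ Hq Hx' Hu') as IHr; rewrite Hq', <- st_emap in IHr; tauto.
Qed.

Lemma mrel_None_twist_eq q p : bvalid B q -> (mrel B None p q <-> twist_eq A (mu B q) p).
Proof.
  unfold bvalid, twist_eq, mu; destruct q as [ub b | b f q']; intros Hq;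
    destruct p as [v a | a e r]; simpl in *; try tauto.
  - split; intros [<- ->]; split; auto; gsimpl; reflexivity.
  - destruct Hq as [Hb [Hq' Hq]].
    split; intros [<- [c [Hc [-> Hm]]]]; split; auto; exists c; split; auto;
      rewrite emap_o; (split; [gsimpl; reflexivity|]);
      assert (Hx' : gin (Av (vmap B (qs q'))) (ginv (Av (st (emap B f))) (omega (emap B f) c)))
        by (rewrite Hq', <- st_emap; gmem);
      assert (Hu' : gin (Av (vmap B (qs q'))) (fw B f)) by (rewrite Hq'; gmem);
      pose proof (mrel_Some_twist q' r _ _ Hq Hx' Hu') as Hiff;
      rewrite Hq', <- st_emap in Hiff; tauto.
Qed.

End FoldedAGraph.

Theorem mainTheorem10 (A : graph_of_groups) (B : agraph A) (p : apath A) :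
  folded B -> avalid A p -> areduced A p ->
  ((exists q : bpath B, bvalid B q /\ breduced B q /\ aequiv A p (mu B q)) <->
   (exists q : bpath B, bvalid B q /\ breduced B q /\ mrel B None p q)).
Proof.
  intros Hfold Hv Hr.
  split; intros [q [Hq [Hqr H]]]; exists q; do 2 (split; [assumption|]).
  - apply mrel_None_twist_eq; auto.
    apply twist_eq_sym; auto.
    apply aequiv_reduced_twist_eq; auto.
    apply mu_reduced; auto.
  - apply rst_sym, twist_eq_aequiv.
    + apply mu_valid; auto.
    + apply mrel_None_twist_eq; auto.
Qed.
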